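(* Let $A$ be an $n\times n$ dilation matrix and let $\mu$ be the smallest singular value of $A$. If $\mu>2\sqrt n$, then $A$ yields a radix representation of $\mathbb{Z}^n$ with digit set $D=A(F)\cap\mathbb{Z}^n$, where $F=[-\tfrac12,\tfrac12)^n$; that is, for every $x\in\mathbb{Z}^n$ there exist $N\ge0$ and $d_0,\dots,d_N\in D$ with $x=\sum_{j=0}^NA^jd_j$.
   Context: A dilation matrix is an $n\times n$ matrix with integer entries all of whose eigenvalues $\lambda$ satisfy $|\lambda|>1$. $D$ is a complete set of coset representatives of $\mathbb{Z}^n/A(\mathbb{Z}^n)$. A matrix $A$ yields a radix representation with digit set $D$ if for every $x_0\in\mathbb{Z}^n$ the Euclidean algorithm $x_j=Ax_{j+1}+r_j$ ($x_{j+1}\in\mathbb{Z}^n$, $r_j\in D$, uniquely determined) terminates, i.e. $x_j=r_j=\mathbf 0$ for all sufficiently large $j$; equivalently every $x\in\mathbb{Z}^n$ is a finite sum $\sum_{j=0}^N A^jd_j$ with $d_j\in D$. *)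

From HB Require Import structures.
From mathcomp Require Import all_boot all_order all_algebra all_field.
Set Implicit Arguments. Unset Strict Implicit. Unset Printing Implicit Defensive.
Import Order.TTheory GRing.Theory Num.Theory.
Local Open Scope ring_scope.

Definition mxC (n : nat) (A : 'M[int]_n) : 'M[algC]_n :=
  map_mx (fun z : int => z%:~R) A.

Definition vecC (n : nat) (x : 'cV[int]_n) : 'cV[algC]_n :=
  map_mx (fun z : int => z%:~R) x.

(* j-th power of a square integer matrix (works for every n, including 0). *)
Definition mxpow (n : nat) (A : 'M[int]_n) (j : nat) : 'M[int]_n :=
  iter j (mulmx A) 1%:M.

Definition dilation (n : nat) (A : 'M[int]_n) : Prop :=
  forall l : algC, eigenvalue (mxC A) l -> 1 < `|l|.

(* s is a singular value of A: s >= 0 and s^2 is an eigenvalue of A^T A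
   (A is real, so A^T is its conjugate transpose). *)
Definition singular_value (n : nat) (A : 'M[int]_n) (s : algC) : Prop :=
  0 <= s /\ eigenvalue ((mxC A)^T *m mxC A) (s ^+ 2).

Definition in_F (n : nat) (y : 'cV[algC]_n) : Prop :=
  forall i, y i 0 \is Num.real /\ (- (1 / 2%:R) <= y i 0) /\ (y i 0 < 1 / 2%:R).

Definition digit (n : nat) (A : 'M[int]_n) (d : 'cV[int]_n) : Prop :=
  exists y : 'cV[algC]_n, in_F y /\ mxC A *m y = vecC d.

From HB Require Import structures.
From mathcomp Require Import all_boot all_order all_algebra all_field.
From mathcomp Require Import ring lra.
Set Implicit Arguments. Unset Strict Implicit. Unset Printing Implicit Defensive.
Import Order.TTheory GRing.Theory Num.Theory.
Local Open Scope ring_scope.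
Local Open Scope sesquilinear_scope.

(* Divide with remainder: for x : Z^n let q be A^-1 x rounded coordinatewise
   to the nearest integer (ties upwards); then r = x - A q lies in
   A(F) ∩ Z^n.  Diagonalizing the normal matrix A^* A by a unitary matrix,
   whose eigenvalues are the squared singular values, gives
   |A v|^2 > 4n |v|^2 for v <> 0.  Hence the quotient of x <> 0 is strictly
   shorter than x: with z = A^-1 x, either |z|^2 < 1/4 and q = 0, or
   |q|^2 <= 2|z|^2 + n/2 <= 4n |z|^2 < |A z|^2 = |x|^2.  So the iterated
   division reaches 0 and yields the radix expansion. *)

Definition normsq (R : numDomainType) n (v : 'cV[R]_n) : R := \sum_i `|v i 0| ^+ 2.

Section NormSq.
Variables (R : numDomainType) (n : nat).
Implicit Types v w : 'cV[R]_n.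

Lemma normsq_ge0 v : 0 <= normsq v.
Proof. by apply: sumr_ge0 => i _; rewrite exprn_ge0. Qed.

Lemma normsq0 : normsq (0 : 'cV[R]_n) = 0.
Proof. by rewrite /normsq big1 // => i _; rewrite mxE normr0 expr0n. Qed.

Lemma normsq_eq0 v : (normsq v == 0) = (v == 0).
Proof.
apply/eqP/eqP => [v0 | ->]; last exact: normsq0.
apply/colP => i; apply/eqP; rewrite mxE -normr_eq0 -sqrf_eq0.
by apply/eqP/(psumr_eq0P _ v0) => // j _; rewrite exprn_ge0.
Qed.

Lemma normsq_gt0 v : (0 < normsq v) = (v != 0).
Proof. by rewrite lt0r normsq_eq0 normsq_ge0 andbT. Qed.

Lemma ler_normsq v i : `|v i 0| ^+ 2 <= normsq v.
Proof.
by rewrite /normsq (bigD1 i) //= lerDl sumr_ge0 // => j _; rewrite exprn_ge0.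
Qed.

Lemma normsq_le_const c v : (forall i, `|v i 0| <= c) -> normsq v <= c ^+ 2 *+ n.
Proof.
move=> vc; rewrite -[n in _ *+ n]card_ord -sumr_const; apply: ler_sum => i _.
by rewrite ler_pXn2r ?nnegrE ?(le_trans _ (vc i)).
Qed.

Lemma normsqB_le v w : normsq (v - w) <= 2 * normsq v + 2 * normsq w.
Proof.
rewrite !mulr_sumr -big_split /=; apply: ler_sum => i _; rewrite !mxE.
have a0 := normr_ge0 (v i 0); have b0 := normr_ge0 (w i 0).
apply: le_trans (_ : (`|v i 0| + `|w i 0|) ^+ 2 <= _).
  by rewrite lerXn2r ?nnegrE ?addr_ge0 ?ler_normB.
rewrite -subr_ge0 (_ : _ - _ = (`|v i 0| - `|w i 0|) ^+ 2); last first.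
  by rewrite sqrrD sqrrB; ring.
by rewrite real_exprn_even_ge0 // realB ?ger0_real.
Qed.

Lemma ltr_normsq_weighted (c : R) (d : 'I_n -> R) w :
  (forall k, c < d k) -> w != 0 -> c * normsq w < \sum_k d k * `|w k 0| ^+ 2.
Proof.
move=> cd; rewrite -normsq_gt0 lt0r => /andP[/eqP w0 _].
have [k /andP[_ wk]] := psumr_neq0P (fun k _ => exprn_ge0 2 (normr_ge0 (w k 0))) w0.
rewrite mulr_sumr [ltRHS](bigD1 k) //= [ltLHS](bigD1 k) //= ltr_leD //.
  by rewrite ltr_pM2r.
by apply: ler_sum => j _; rewrite ler_wpM2r ?exprn_ge0 // ltW.
Qed.
End NormSq.

Lemma normsqE (C : numClosedFieldType) n (v : 'cV[C]_n) : normsq v = (v ^t* *m v) 0 0.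
Proof. by rewrite mxE; apply: eq_bigr => i _; rewrite !mxE normCKC. Qed.

Lemma normsq_unitary (C : numClosedFieldType) n (P : 'M[C]_n) (v : 'cV[C]_n) :
  P \is unitarymx -> normsq (P *m v) = normsq v.
Proof.
move=> Pu; rewrite !normsqE trmx_mul map_mxM mulmxA -(mulmxA _ _ P).
by rewrite -invmx_unitary // mulVmx ?unitarymx_unit // mulmx1.
Qed.

Lemma eigenvalue_spectral_diag (C : numClosedFieldType) n (A : 'M[C]_n) i :
  A \is normalmx -> eigenvalue A (spectral_diag A 0 i).
Proof.
move=> /orthomx_spectralP; set P := spectralmx A => AE.
have Punit : P \in unitmx by apply: spectral_unit.
apply/eigenvalueP; exists (row i P).
  have PA : P *m A = diag_mx (spectral_diag A) *m P.
    by rewrite [in LHS]AE !mulmxA mulmxV // mul1mx.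
  by rewrite -row_mul PA row_mul row_diag_mx -scalemxAl -rowE.
apply: contra_neq (oner_neq0 C) => Pi0.
have /rowP/(_ i) := congr1 (mulmx^~ (invmx P)) Pi0.
by rewrite -row_mul mulmxV // mul0mx !mxE eqxx.
Qed.

Section Gram.
Variables (C : numClosedFieldType) (m n : nat) (M : 'M[C]_(m, n)).
Local Notation G := (M ^t* *m M).

Lemma gram_normal : G \is normalmx.
Proof. by apply/normalmxP; rewrite trmx_mul map_mxM trmxCK. Qed.

Lemma eigenvalue_gram_ge0 l : eigenvalue G l -> 0 <= l.
Proof.
move=> /eigenvalueP[v vG v0].
have vM : dotmx (v *m M ^t*) (v *m M ^t*) = l * dotmx v v.
  by rewrite !dotmxE trmx_mul map_mxM trmxCK !mulmxA -(mulmxA v) vG -scalemxAl mxE.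
have vv : 0 < dotmx v v by rewrite dnorm_gt0.
by rewrite -(pmulr_lge0 _ vv) -vM dnorm_ge0.
Qed.

Lemma normsq_gram z (P := spectralmx G) (D := spectral_diag G) :
  normsq (M *m z) = \sum_k D 0 k * `|(P *m z) k 0| ^+ 2.
Proof.
rewrite normsqE; have GE := orthomx_spectralP gram_normal.
have -> : (M *m z) ^t* *m (M *m z) = z ^t* *m G *m z.
  by rewrite trmx_mul map_mxM !mulmxA.
rewrite [G in z ^t* *m G]GE invmx_unitary ?spectral_unitarymx // -/P -/D.
have -> : z ^t* *m (P ^t* *m diag_mx D *m P) *m z = (P *m z) ^t* *m diag_mx D *m (P *m z).
  by rewrite trmx_mul map_mxM !mulmxA.
rewrite mul_mx_diag mxE; apply: eq_bigr => k _; rewrite !mxE normCKC.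
by rewrite mulrCA mulrA.
Qed.

Lemma ltr_normsq_gram c z :
  (forall l, eigenvalue G l -> c < l) -> z != 0 -> c * normsq z < normsq (M *m z).
Proof.
move=> cG z0; rewrite normsq_gram -(normsq_unitary z (spectral_unitarymx G)).
apply: ltr_normsq_weighted => [k | ].
  by apply/cG/eigenvalue_spectral_diag/gram_normal.
by apply: contra_neq z0 => Pz0; rewrite -(mulKmx (spectral_unit G) z) Pz0 mulmx0.
Qed.
End Gram.

Definition round {R : archiRealFieldType} (x : R) : int := Num.floor (x + 2^-1).

Section Round.
Variable R : archiRealFieldType.
Implicit Type x : R.

Lemma round_itv x : - 2^-1 <= x - (round x)%:~R < 2^-1.
Proof.
have /andP[lo hi] := floor_itv (x + 2^-1); rewrite intrD in hi.
by apply/andP; split; rewrite /round; lra.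
Qed.

Lemma round_eq0 x : `|x| < 2^-1 -> round x = 0.
Proof. by rewrite ltr_norml => /andP[lo hi]; apply: floor_def; rewrite add0r; lra. Qed.
End Round.

Definition ratmx m p (M : 'M[int]_(m, p)) : 'M[rat]_(m, p) := map_mx intr M.

Lemma normsq_ratmx n (x : 'cV[int]_n) : normsq (ratmx x) = (normsq x)%:~R.
Proof.
by rewrite /normsq rmorph_sum; apply: eq_bigr => i _; rewrite mxE -intr_norm rmorphXn.
Qed.

Lemma normsq_ratr n (v : 'cV[rat]_n) : normsq (map_mx ratr v) = ratr (normsq v) :> algC.
Proof.
by rewrite /normsq rmorph_sum; apply: eq_bigr => i _; rewrite mxE -ratr_norm rmorphXn.
Qed.

Lemma ratr_ratmx m p (M : 'M[int]_(m, p)) :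
  map_mx ratr (ratmx M) = map_mx (fun z => z%:~R) M :> 'M[algC]_(m, p).
Proof. by rewrite -map_mx_comp; apply: eq_map_mx => z /=; rewrite ratr_int. Qed.

Lemma mxC_trC n (A : 'M[int]_n) : (mxC A) ^t* = (mxC A)^T.
Proof. by apply/matrixP => i j; rewrite !mxE rmorph_int. Qed.

Lemma dilation_unitmx n (A : 'M[int]_n) : dilation A -> ratmx A \in unitmx.
Proof.
move=> dilA; rewrite unitmxE unitfE det_map_mx intr_eq0; apply/negP => /eqP det0.
have : eigenvalue (mxC A) 0.
  by rewrite eigenvalue_root_char rootE horner_coef0 char_poly_det det_map_mx det0 mulr0.
by move/dilA; rewrite normr0 ltr10.
Qed.

Lemma singular_value_expands n (A : 'M[int]_n) :
  (forall s, singular_value A s -> 2%:R * sqrtC n%:R < s) ->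
  forall v : 'cV[rat]_n, v != 0 -> 4%:R * n%:R * normsq v < normsq (ratmx A *m v).
Proof.
move=> svA v v0.
have Gv : 4%:R * n%:R * normsq (map_mx ratr v) < normsq (mxC A *m map_mx ratr v).
  apply: ltr_normsq_gram; last by rewrite map_mx_eq0.
  move=> l Gl; have l_ge0 := eigenvalue_gram_ge0 Gl.
  rewrite mxC_trC in Gl.
  have /svA lt_l : singular_value A (sqrtC l) by split; rewrite ?sqrtC_ge0 ?sqrtCK.
  have c_ge0 : 0 <= 2%:R * sqrtC n%:R :> algC by rewrite mulr_ge0 ?sqrtC_ge0.
  by have := ltrXn2r 2 c_ge0 lt_l; rewrite exprMn !sqrtCK -natrX.
rewrite /mxC -ratr_ratmx -map_mxM !normsq_ratr in Gv.
by rewrite -(ltr_rat algC) !rmorphM !rmorph_nat.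
Qed.

Section Radix.
Variables (n : nat) (A : 'M[int]_n).
Hypothesis A_unit : ratmx A \in unitmx.
Hypothesis A_expands :
  forall v : 'cV[rat]_n, v != 0 -> 4%:R * n%:R * normsq v < normsq (ratmx A *m v).

Definition radix_approx (x : 'cV[int]_n) : 'cV[rat]_n := invmx (ratmx A) *m ratmx x.

Definition radix_quo (x : 'cV[int]_n) : 'cV[int]_n := map_mx round (radix_approx x).

Definition radix_rem (x : 'cV[int]_n) : 'cV[int]_n := x - A *m radix_quo x.

Lemma radix_approxK x : ratmx A *m radix_approx x = ratmx x.
Proof. by rewrite mulmxA mulmxV // mul1mx. Qed.

Lemma radix_err_entry x i : let z := radix_approx x in
  (z - ratmx (radix_quo x)) i 0 = z i 0 - (round (z i 0))%:~R.
Proof. by move=> z; rewrite !mxE. Qed.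

Lemma radix_rem_digit x : digit A (radix_rem x).
Proof.
set z := radix_approx x.
exists (map_mx ratr (z - ratmx (radix_quo x))); split.
  move=> i; rewrite mxE radix_err_entry.
  have half : 1 / 2%:R = ratr (2^-1 : rat) :> algC by rewrite div1r fmorphV rmorph_nat.
  have nhalf : - (1 / 2%:R) = ratr (- 2^-1 : rat) :> algC by rewrite rmorphN half.
  have /andP[lo hi] := round_itv (z i 0).
  by rewrite nhalf half ler_rat ltr_rat Creal_Crat ?Crat_rat.
rewrite /mxC -!ratr_ratmx -map_mxM mulmxBr radix_approxK.
rewrite /vecC -ratr_ratmx; congr map_mx.
by rewrite /radix_rem /ratmx map_mxB map_mxM.
Qed.

Lemma radix_quo0 : radix_quo 0 = 0.
Proof.
rewrite /radix_quo /radix_approx /ratmx map_mx0 mulmx0.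
by apply/colP => i; rewrite !mxE round_eq0 // normr0 invr_gt0 ltr0n.
Qed.

Lemma normsq_radix_quo_lt x : x != 0 -> normsq (radix_quo x) < normsq x.
Proof.
move=> x0; set z := radix_approx x.
have [z_small | z_large] := ltrP (normsq z) (4^-1).
  suff -> : radix_quo x = 0 by rewrite normsq0 normsq_gt0.
  apply/colP => i; rewrite mxE [RHS]mxE round_eq0 //.
  rewrite -(ltr_pXn2r (_ : 0 < 2)%N) ?nnegrE ?invr_ge0 ?ler0n //.
  by apply: le_lt_trans (ler_normsq z i) _; rewrite expr2; lra.
set e := z - ratmx (radix_quo x).
have e_small : normsq e <= (2^-1) ^+ 2 *+ n.
  apply: normsq_le_const => i; rewrite radix_err_entry ler_norml.
  by have /andP[lo hi] := round_itv (z i 0); rewrite lo ltW.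
have z0 : normsq z != 0 by rewrite gt_eqF // (lt_le_trans _ z_large) // invr_gt0 ltr0n.
have [i _] := psumr_neq0P (fun i _ => exprn_ge0 2 (normr_ge0 (z i 0))) (elimN eqP z0).
have n_ge1 : 1 <= n%:R :> rat by rewrite ler1n (leq_ltn_trans (leq0n i) (ltn_ord i)).
rewrite -(ltr_int rat) -!normsq_ratmx -(radix_approxK x) -/z.
have -> : ratmx (radix_quo x) = z - e by rewrite opprB addrC subrK.
apply: le_lt_trans (A_expands _); last by rewrite -normsq_eq0.
apply: le_trans (normsqB_le z e) _; rewrite -mulr_natr in e_small.
have t_ge0 := normsq_ge0 z; nra.
Qed.

Lemma radix_expansion x :
  exists (N : nat) (d : 'I_N.+1 -> 'cV[int]_n),
    (forall j, digit A (d j)) /\ x = \sum_(j < N.+1) mxpow A j *m d j.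
Proof.
have [k] := ubnP `|normsq x|%N; elim: k x => // k IHk x; rewrite ltnS => le_xk.
have [->|x0] := eqVneq x 0.
  exists 0%N, (fun=> radix_rem 0); split=> [_|]; first exact: radix_rem_digit.
  by rewrite big_ord1 mul1mx /radix_rem radix_quo0 mulmx0 subr0.
have lt_quo : (`|normsq (radix_quo x)| < k)%N.
  rewrite (leq_trans _ le_xk) // -ltz_nat !gez0_abs ?normsq_ge0 //.
  exact: normsq_radix_quo_lt.
have [N [d [d_digit quoE]]] := IHk _ lt_quo.
exists N.+1, (fun j => if unlift ord0 j is Some i then d i else radix_rem x); split.
  by move=> j; case: unlift => [i|]; [exact: d_digit | exact: radix_rem_digit].
rewrite big_ord_recl unlift_none mul1mx; under eq_bigr do rewrite liftK.
have -> : \sum_(i < N.+1) mxpow A (lift ord0 i) *m d i = A *m radix_quo x.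
  by rewrite quoE mulmx_sumr; apply: eq_bigr => i _; rewrite mulmxA.
by rewrite /radix_rem subrK.
Qed.
End Radix.

Theorem mainTheorem6 (n : nat) (A : 'M[int]_n) :
  dilation A ->
  (forall s : algC, singular_value A s -> 2%:R * sqrtC n%:R < s) ->
  forall x : 'cV[int]_n,
    exists (N : nat) (d : 'I_N.+1 -> 'cV[int]_n),
      (forall j, digit A (d j)) /\
      x = \sum_(j < N.+1) mxpow A j *m d j.
Proof.
move=> dilA svA.
exact: radix_expansion (dilation_unitmx dilA) (singular_value_expands svA).
Qed.
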